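(* There exist a temporal graph $\mathcal{G}=(X,A)\in\mathbb{T}_{n,T,p}$ (with $T=2$, no node or edge attributes beyond edge presence) whose aggregated graph consists of two connected components, and nodes $u,v,w$ with $u,w$ in the same component, $(u,w)$ an edge at time $T$, and $v$ in the other component, such that for every node-equivariant temporal node representation $f:\mathbb{T}_{n,T,p}\to\mathbb{R}^{n\times d}$ (in particular every one in the time-and-graph or time-then-graph families built from equivariant components) one has $f(\mathcal{G})_u=f(\mathcal{G})_v$, and hence for every link-scoring function $s:\mathbb{R}^d\times\mathbb{R}^d\to\mathbb{R}$, $s(f(\mathcal{G})_u,f(\mathcal{G})_w)=s(f(\mathcal{G})_v,f(\mathcal{G})_w)$. Consequently no link predictor based on equivariant temporal node representations can correctly predict temporal links on $\mathcal{G}$.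
   Context: $\mathbb{T}_{n,T,p}=\mathbb{R}^{n\times T\times p}\times\mathbb{R}^{n\times n\times T\times p}$ is the set of temporal graphs $(X,A)$ on node set $V=\{1,\dots,n\}$ over $T$ time steps with node attributes $X_{i,t}$ and edge attributes $A_{i,j,t}$ (an edge $(i,j)$ is present at time $t$ iff $A_{i,j,t}\neq0$). The aggregated graph has an edge $\{i,j\}$ iff $A_{i,j,t}\ne0$ for some $t$. A permutation $\pi$ of $V$ acts by $(\pi X)_{\pi(i),t}=X_{i,t}$, $(\pi A)_{\pi(i),\pi(j),t}=A_{i,j,t}$, and on $Z\in\mathbb{R}^{n\times d}$ by $(\pi Z)_{\pi(i)}=Z_i$. A temporal node representation $f:\mathbb{T}_{n,T,p}\to\mathbb{R}^{n\times d}$ is node-equivariant if $f(\pi\mathcal{G})=\pi f(\mathcal{G})$ for all $\pi$ and $\mathcal{G}$. A link between $a,b$ is predicted by applying $s$ to $(f(\mathcal{G})_a,f(\mathcal{G})_b)$. *)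

From HB Require Import structures.
From mathcomp Require Import all_boot all_order all_algebra all_fingroup.
From mathcomp Require Import reals.
Set Implicit Arguments. Unset Strict Implicit. Unset Printing Implicit Defensive.
Import Order.TTheory GRing.Theory Num.Theory.
Local Open Scope ring_scope.

(* Temporal graphs T_{n,T,p}: node attributes X_{i,t} in R^p and edge
   attributes A_{i,j,t} in R^p. *)
Definition tgraph (R : realType) (n T p : nat) : Type :=
  (('I_n -> 'I_T -> 'rV[R]_p) * ('I_n -> 'I_n -> 'I_T -> 'rV[R]_p))%type.

(* Action of a permutation pi of V on a temporal graph:
   (pi X)_{pi i, t} = X_{i,t},  (pi A)_{pi i, pi j, t} = A_{i,j,t}. *)
Definition tg_act (R : realType) (n T p : nat) (pi : 'S_n)
  (G : tgraph R n T p) : tgraph R n T p :=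
  (fun i t => G.1 ((pi^-1)%g i) t,
   fun i j t => G.2 ((pi^-1)%g i) ((pi^-1)%g j) t).

(* Action on node representations Z in R^{n x d}: (pi Z)_{pi i} = Z_i. *)
Definition rep_act (R : realType) (n d : nat) (pi : 'S_n) (Z : 'M[R]_(n, d))
  : 'M[R]_(n, d) :=
  \matrix_(i < n, k < d) Z ((pi^-1)%g i) k.

Definition node_equivariant (R : realType) (n T p d : nat)
  (f : tgraph R n T p -> 'M[R]_(n, d)) : Prop :=
  forall (pi : 'S_n) (G : tgraph R n T p), f (tg_act pi G) = rep_act pi (f G).

Definition agg_rel (R : realType) (n T p : nat) (G : tgraph R n T p) : rel 'I_n :=
  fun i j => [exists t : 'I_T, (G.2 i j t != 0) || (G.2 j i t != 0)].

Definition n_components (R : realType) (n T p : nat) (G : tgraph R n T p) : nat :=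
  n_comp (agg_rel G) [pred : 'I_n | true].

From HB Require Import structures.
From mathcomp Require Import all_boot all_order all_algebra all_fingroup.
From mathcomp Require Import reals.
From Stdlib Require Import FunctionalExtensionality.
Import Order.TTheory GRing.Theory Num.Theory.
Local Open Scope ring_scope.

(* If a permutation pi of the nodes is an automorphism of
   a temporal graph G (pi G = G), then node equivariance of f gives
   f G = f (pi G) = pi (f G), i.e. the representation of every node i equals
   that of pi i; any score computed from representations then cannot tell i
   from pi i.  It therefore suffices to exhibit a graph with an automorphism
   that maps a node u to a node v lying in another connected component.

   The witness is the static graph of two disjoint edges {0,1} and {2,3} on
   four nodes, invariant under the rotation i |-> i + 2 (mod 4), which swaps
   the two components and maps 2 to 0 while the edge (0,1) stays in place. *)

Lemma equivariant_row_perm (R : realType) (n T p d : nat)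
    (f : tgraph R n T p -> 'M[R]_(n, d)) (pi : 'S_n) (G : tgraph R n T p) :
  node_equivariant f -> tg_act pi G = G ->
  forall i, row (pi i) (f G) = row i (f G).
Proof.
move=> f_eq piG i; apply/rowP => k.
by rewrite -[in LHS]piG f_eq !mxE permK.
Qed.

Section StaticGraph.
Variables (R : realType) (n T : nat) (e : rel 'I_n).

Definition static_tgraph : tgraph R n T.+1 1 :=
  (fun _ _ => 0,
   fun i j t => if (t == ord_max) && e i j then const_mx 1 else 0).

Lemma const_mx1_neq0 : (const_mx 1 : 'rV[R]_1) != 0.
Proof. by apply/eqP => /matrixP/(_ 0 0); rewrite !mxE; apply/eqP/oner_neq0. Qed.

Lemma static_edge_neq0 i j t :
  (static_tgraph.2 i j t != 0) = (t == ord_max) && e i j.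
Proof. by rewrite /=; case: ifP => _; rewrite ?const_mx1_neq0 ?eqxx. Qed.

Lemma agg_static : symmetric e -> agg_rel static_tgraph =2 e.
Proof.
move=> e_sym i j; apply/existsP/idP.
  by case=> t; rewrite !static_edge_neq0 e_sym orbb => /andP[].
by move=> eij; exists ord_max; rewrite !static_edge_neq0 eqxx eij.
Qed.

Lemma static_tgraph_invariant (pi : 'S_n) :
  (forall i j, e (pi i) (pi j) = e i j) -> tg_act pi static_tgraph = static_tgraph.
Proof.
move=> pi_e; rewrite /tg_act /=; congr pair.
apply: functional_extensionality => i; apply: functional_extensionality => j.
apply: functional_extensionality => t.
by rewrite -(pi_e (pi^-1 i)%g (pi^-1 j)%g) !permKV.
Qed.

End StaticGraph.

(* Two disjoint edges {0,1} and {2,3}: i and j are adjacent iff they are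
   distinct and lie in the same pair. *)
Definition two_edges (i j : 'I_4) : bool := (i %/ 2 == j %/ 2)%N && (i != j).

Lemma two_edges_sym : symmetric two_edges.
Proof. by move=> i j; rewrite /two_edges eq_sym [j == i]eq_sym. Qed.

Definition rot2 (i : 'I_4) : 'I_4 := inord ((i + 2) %% 4).

Lemma rot2K : involutive rot2.
Proof. by case=> [[|[|[|[|]]]] ?] //; apply: val_inj; rewrite /rot2 /= !inordK. Qed.

Definition rot2_perm : 'S_4 := perm (inv_inj rot2K).

Lemma two_edges_rot2 i j : two_edges (rot2_perm i) (rot2_perm j) = two_edges i j.
Proof.
rewrite !permE.
by case: i j => [[|[|[|[|?]]]] ?] [[|[|[|[|?]]]] ?] //; rewrite /two_edges /rot2 -val_eqE /= ?inordK.
Qed.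

(* Nodes 0 and 2 lie in different components: the pair {0,1} is closed. *)
Lemma two_edges_not_conn02 : ~~ connect two_edges (inord 0) (inord 2).
Proof.
have closed01 : closed two_edges [pred x : 'I_4 | (x < 2)%N].
  by case=> [[|[|[|[|?]]]] ?] [[|[|[|[|?]]]] ?].
by apply/negP => /(closed_connect closed01); rewrite !inE !inordK.
Qed.

(* Every node is connected to 0 or to 2, hence there are two components. *)
Lemma two_edges_n_comp : n_comp two_edges [pred : 'I_4 | true] = 2%N.
Proof.
have csym := sym_connect_sym two_edges_sym.
set C := closure two_edges (pred2 (inord 0) (inord 2)).
have C_closed := closure_closed csym (pred2 (inord 0) (inord 2)).
have C0 : (inord 0 : 'I_4) \in C by apply: mem_closure; rewrite !inE eqxx.
have C2 : (inord 2 : 'I_4) \in C by apply: mem_closure; rewrite !inE eqxx orbT.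
have C_all : forall z : 'I_4, z \in C.
  case=> [[|[|[|[|?]]]] Hz] //; set z := Ordinal Hz.
  - by have -> : z = inord 0 by apply: val_inj; rewrite /= inordK.
  - rewrite -(C_closed (inord 0)) //.
    by rewrite /two_edges -val_eqE /= !inordK.
  - by have -> : z = inord 2 by apply: val_inj; rewrite /= inordK.
  - rewrite -(C_closed (inord 2)) //.
    by rewrite /two_edges -val_eqE /= !inordK.
rewrite (@eq_n_comp_r _ _ _ C) => [|z]; last by rewrite C_all.
by rewrite n_comp_closure2 // two_edges_not_conn02.
Qed.

Theorem theorem2 (R : realType) :
  exists (n : nat) (G : tgraph R n 2 1) (u v w : 'I_n),
    (* no node attributes, edge attributes only encode presence (0 or 1) *)
    (forall i t, G.1 i t = 0) /\
    (forall i j t, G.2 i j t = 0 \/ G.2 i j t = const_mx 1) /\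
    (* aggregated graph has exactly two connected components *)
    n_components G = 2%N /\
    (* u, w in the same component, (u,w) an edge at the last time step T = 2 *)
    connect (agg_rel G) u w /\ u != w /\ G.2 u w ord_max != 0 /\
    (* v in the other component *)
    ~~ connect (agg_rel G) u v /\
    forall (d : nat) (f : tgraph R n 2 1 -> 'M[R]_(n, d)),
      node_equivariant f ->
      row u (f G) = row v (f G) /\
      (forall s : 'rV[R]_d -> 'rV[R]_d -> R,
          s (row u (f G)) (row w (f G)) = s (row v (f G)) (row w (f G))).
Proof.
pose G := @static_tgraph R 4 1 two_edges.
have conn_G : connect (agg_rel G) =2 connect two_edges.
  by apply: eq_connect; apply: agg_static two_edges_sym.
have edge01 : two_edges (inord 0) (inord 1) by rewrite /two_edges -val_eqE /= !inordK.
have rot2_20 : rot2_perm (inord 2) = inord 0.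
  by rewrite permE; apply: val_inj; rewrite /= !inordK.
have same_row d (f : tgraph R 4 2 1 -> 'M[R]_(4, d)) : node_equivariant f ->
    row (inord 0) (f G) = row (inord 2) (f G).
  move=> f_eq; rewrite -rot2_20; apply: equivariant_row_perm f_eq _ _.
  exact: static_tgraph_invariant two_edges_rot2.
exists 4%N, G, (inord 0), (inord 2), (inord 1).
split; first by [].
split; first by move=> i j t /=; case: ifP; [right | left].
split; first by rewrite /n_components (eq_n_comp conn_G) two_edges_n_comp.
split; first by rewrite conn_G connect1.
split; first by apply/eqP => /(congr1 val); rewrite /= !inordK.
split; first by rewrite static_edge_neq0 eqxx edge01.
split; first by rewrite conn_G two_edges_not_conn02.
by move=> d f f_eq; split=> [|s]; rewrite (same_row d f f_eq).
Qed.
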